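(* Let $p\ge 1$ be an integer and for each $i\in\{0,\dots,p\}$ let $S_i$ be a $\Delta_i$-star with $\Delta_i\ge 3$. Let $G_0=S_0$ and for $i\in\{1,\dots,p\}$ let $G_i = G_{i-1}\rhd_{v_{i-1}} S_i$, where $v_{i-1}$ is a vertex of $G_{i-1}$. Let $G=G_p$ have order $n$ and maximum degree $\Delta$, and let $\Delta_{\max}=\max\{\Delta_i: 0\le i\le p\}$. Then \[\gamma^{\rm ID}(G)\le \left(\frac{\Delta_{\max}-1}{\Delta_{\max}}\right)n + \frac{1}{\Delta_0} \le \left(\frac{\Delta-1}{\Delta}\right)n + \frac13.\]
   Context: An identifying code of a graph $G$ is a set $C\subseteq V(G)$ such that every vertex $v$ has $N[v]\cap C\neq\emptyset$ and for all distinct $u,v$, $N[u]\cap C \ne N[v]\cap C$, where $N[v]$ is the closed neighborhood; $\gamma^{\rm ID}(G)$ is its minimum size. A $k$-star is $K_{1,k}$. For a graph $G'$, a vertex $v$ of $G'$ and a star $S$, $G'\rhd_v S$ is the graph obtained from the disjoint union of $G'$ and $S$ by identifying $v$ with a leaf of $S$. *)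

From mathcomp Require Import all_boot all_order all_algebra.
Set Implicit Arguments. Unset Strict Implicit. Unset Printing Implicit Defensive.

(* A finite simple graph is given by its number of vertices n (vertex set
   {0,...,n-1}) and a symmetric, irreflexive adjacency relation on nat
   (only its restriction to vertices < n matters). *)
Definition graph := (nat * rel nat)%type.

Definition star_graph (d : nat) : graph :=
  (d.+1, fun x y => [&& x < d.+1, y < d.+1 &
                     ((x == 0) && (y != 0)) || ((y == 0) && (x != 0))]).

(* G |>_v S with S a d-star: a fresh centre c := n is added, adjacent to v
   (the leaf identified with v) and to d-1 fresh leaves n+1, ..., n+d-1. *)
Definition star_edge (n v d : nat) (x y : nat) : bool :=
  (x == n) && ((y == v) || ((n < y) && (y < n + d))).

Definition attach_star (G : graph) (v d : nat) : graph :=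
  (G.1 + d, fun x y => [|| G.2 x y, star_edge G.1 v d x y | star_edge G.1 v d y x]).

Fixpoint star_chain (Ds vs : nat -> nat) (i : nat) : graph :=
  match i with
  | 0 => star_graph (Ds 0)
  | i'.+1 => attach_star (star_chain Ds vs i') (vs i') (Ds i)
  end.

Section GraphParams.
Variable G : graph.

Definition V := 'I_G.1.

Definition cnbhd (v : V) : {set V} := [set u : V | (u == v) || G.2 v u].

Definition is_idcode (C : {set V}) : bool :=
  [forall v : V, cnbhd v :&: C != set0] &&
  [forall u : V, forall v : V, (u != v) ==> (cnbhd u :&: C != cnbhd v :&: C)].

(* gamma^ID(G): minimum size of an identifying code; if none exists we
   return n+1 (a value exceeding every possible code size, standing for +oo). *)
Definition gammaID : nat :=
  \big[minn/G.1.+1]_(C : {set V} | is_idcode C) #|C|.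

Definition degree (v : V) : nat := #|[set u : V | G.2 v u]|.

Definition max_degree : nat := \max_(v : V) degree v.

End GraphParams.

From mathcomp Require Import all_boot all_order all_algebra.
From mathcomp Require Import zify ring.
Import Order.TTheory GRing.Theory Num.Theory.

Set Implicit Arguments.
Unset Strict Implicit.
Unset Printing Implicit Defensive.

(* The vertices of [G_p] other than the [p+1] star centres form an identifying
   code: when a star is attached, each new leaf is the only code vertex in its
   own closed neighbourhood, the new centre sees at least two new leaves, and
   the old vertices keep their code neighbourhoods.  Hence
   [gamma^ID(G) <= n - (p+1)], which with [n <= Delta_0 + 1 + p * Dmax] gives
   the first bound.  The second follows from [Dmax <= Delta] (every centre
   keeps its [Delta_i] neighbours in [G_p]) and [Delta_0 >= 3]. *)

Definition edges_within (G : graph) :=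
  forall x y, G.2 x y -> (x < G.1) && (y < G.1).

Definition in_cnbhd (G : graph) (x w : nat) := (w == x) || G.2 x w.

Definition dominates (G : graph) (c : pred nat) :=
  forall x, x < G.1 -> exists2 u, (u < G.1) && c u & in_cnbhd G x u.

Definition separated_by (G : graph) (c : pred nat) (x y : nat) :=
  exists2 w, (w < G.1) && c w & in_cnbhd G x w != in_cnbhd G y w.

Definition separates (G : graph) (c : pred nat) :=
  forall x y, x < G.1 -> y < G.1 -> x != y -> separated_by G c x y.

Lemma edge_out_of_range (G : graph) x y :
  edges_within G -> (G.1 <= x) || (G.1 <= y) -> G.2 x y = false.
Proof. by move=> Gw out; apply/negP => /Gw; lia. Qed.

Lemma separated_by_sym (G : graph) c x y :
  separated_by G c x y -> separated_by G c y x.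
Proof. by case=> w cw e; exists w; rewrite // eq_sym. Qed.

Lemma card_set_pred n (P : pred nat) : #|[set x : 'I_n | P x]| = count P (iota 0 n).
Proof.
rewrite cardE /enum_mem -enumT size_filter -val_enum_ord count_map.
by apply: eq_count => x; rewrite /= inE.
Qed.

Lemma is_idcode_of_pred (G : graph) (c : pred nat) :
  dominates G c -> separates G c -> is_idcode [set x : V G | c x].
Proof.
move=> Gdom Gsep; apply/andP; split.
- apply/forallP => x; have [u /andP[hu cu] xu] := Gdom x (ltn_ord x).
  by apply/set0Pn; exists (Ordinal hu); rewrite !inE cu andbT.
- apply/forallP => x; apply/forallP => y; apply/implyP => xy.
  have [w /andP[hw cw]] := Gsep x y (ltn_ord x) (ltn_ord y) xy.
  apply: contra => /eqP/setP/(_ (Ordinal hw)).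
  by rewrite !inE cw !andbT => /eqP.
Qed.

Lemma gammaID_le_card (G : graph) (C : {set V G}) : is_idcode C -> gammaID G <= #|C|.
Proof.
move=> hC; rewrite /gammaID -minEnat.
exact: (bigmin_le_cond _ (fun C : {set V G} => #|C|) hC).
Qed.

Lemma size_le_max_degree (G : graph) x (s : seq nat) : x < G.1 -> uniq s ->
  (forall u, u \in s -> (u < G.1) && G.2 x u) -> size s <= max_degree G.
Proof.
move=> hx us hs; apply: leq_trans (leq_bigmax (Ordinal hx)).
rewrite /degree card_set_pred -size_filter; apply: uniq_leq_size => // u /hs.
by case/andP=> hu xu; rewrite mem_filter mem_iota /= xu.
Qed.

Lemma star_graph_identifies D : 1 < D ->
  [/\ edges_within (star_graph D), dominates (star_graph D) (fun x => x != 0)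
    & separates (star_graph D) (fun x => x != 0)].
Proof.
move=> hD; split.
- by move=> x y /and3P[-> -> _].
- move=> x /= hx; case: (eqVneq x 0) => [->|x0].
  + by exists 1; rewrite /in_cnbhd /=; lia.
  + by exists x; rewrite /in_cnbhd /=; lia.
- move=> x y /= hx hy xy; rewrite /separated_by /in_cnbhd /=.
  case: (eqVneq x 0) => [x0|x0].
  + by exists (if y == 1 then 2 else 1); case: (eqVneq y 1) => /=; lia.
  case: (eqVneq y 0) => [y0|y0].
  + by exists (if x == 1 then 2 else 1); case: (eqVneq x 1) => /=; lia.
  by exists x => /=; lia.
Qed.

Definition extend_code (c : pred nat) (n : nat) : pred nat :=
  fun x => if x < n then c x else x != n.

Lemma count_extend_code c n D : 0 < D ->
  count (extend_code c n) (iota 0 (n + D)) = count c (iota 0 n) + D.-1.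
Proof.
case: D => // D _; rewrite iotaD count_cat add0n.
have -> : count (extend_code c n) (iota 0 n) = count c (iota 0 n).
  by apply: eq_in_count => x; rewrite mem_iota /extend_code => /andP[_ ->].
congr (_ + _); rewrite -[RHS](size_iota n.+1 D) -count_predT /=.
rewrite {1}/extend_code ltnn eqxx add0n; apply: eq_in_count => x.
by rewrite mem_iota /extend_code => /andP[hx _]; rewrite ltnNge (ltnW hx) (gtn_eqF hx).
Qed.

Section AttachStar.
Variables (G : graph) (c : pred nat) (v D : nat).
Hypotheses (Gw : edges_within G) (hv : v < G.1) (hD : 2 < D).

Local Notation n := G.1.
Local Notation G' := (attach_star G v D).
Local Notation c' := (extend_code c n).

Lemma attach_star_edges_within : edges_within G'.
Proof. by move=> x y /orP[/Gw|]; rewrite /star_edge /=; lia. Qed.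

Lemma extend_code_old x : x < n -> c' x = c x.
Proof. by rewrite /extend_code => ->. Qed.

Lemma extend_code_new x : n <= x -> c' x = (x != n).
Proof. by rewrite /extend_code ltnNge => ->. Qed.

Lemma attach_star_edge_old x y : x < n -> y < n -> G'.2 x y = G.2 x y.
Proof. by rewrite /= /star_edge => xn yn; rewrite !(ltn_eqF xn, ltn_eqF yn) !orbF. Qed.

Lemma attach_star_edge_new x y : (n <= x) || (n <= y) ->
  G'.2 x y = star_edge n v D x y || star_edge n v D y x.
Proof. by move=> out; rewrite /= edge_out_of_range. Qed.

Lemma attach_star_dominates : dominates G c -> dominates G' c'.
Proof.
move=> Gdom x /= hx; case: (ltnP x n) => [xn|nx].
- have [u /andP[hu cu] xu] := Gdom x xn; exists u.
    by rewrite extend_code_old // cu andbT; lia.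
  by rewrite /in_cnbhd attach_star_edge_old.
- case: (eqVneq x n) => [->|xn]; [exists n.+1 | exists x].
  all: rewrite /in_cnbhd ?extend_code_new ?attach_star_edge_new /star_edge; lia.
Qed.

Lemma attach_star_centre_separated y : y < n + D -> y != n -> separated_by G' c' n y.
Proof.
(* One of the two leaves [n+1], [n+2] differs from [y]; hence [D >= 3]. *)
move=> hy yn; exists (if y == n.+1 then n.+2 else n.+1).
all: case: (eqVneq y n.+1) => yn1 /=;
  rewrite /in_cnbhd ?extend_code_new ?attach_star_edge_new /star_edge /=; lia.
Qed.

Lemma attach_star_leaf_separated y x : n < y < n + D -> x < n + D -> x != y -> x != n ->
  separated_by G' c' y x.
Proof.
move=> hy hx xy xn; exists y;
  rewrite /in_cnbhd ?extend_code_new ?attach_star_edge_new /star_edge /=; lia.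
Qed.

Lemma attach_star_separates : separates G c -> separates G' c'.
Proof.
move=> Gsep x y /= hx hy xy.
case: (eqVneq x n) xy => [-> ny|xn xy].
  by apply: attach_star_centre_separated; rewrite // eq_sym.
case: (eqVneq y n) xy => [-> _|yn xy].
  by apply: separated_by_sym; apply: attach_star_centre_separated.
case: (ltnP n x) => [nx|xlen].
  by apply: attach_star_leaf_separated; lia.
case: (ltnP n y) => [ny|ylen].
  by apply: (@separated_by_sym _ _ y x); apply: attach_star_leaf_separated; lia.
have [hx' hy'] : x < n /\ y < n by lia.
have [w /andP[hw cw] e] := Gsep x y hx' hy' xy.
exists w; first by rewrite /= extend_code_old // cw ltn_addr.
by rewrite /in_cnbhd !attach_star_edge_old.
Qed.

End AttachStar.

Fixpoint star_chain_code (Ds vs : nat -> nat) (i : nat) : pred nat :=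
  if i is i'.+1 then extend_code (star_chain_code Ds vs i') (star_chain Ds vs i').1
  else fun x => x != 0.

Section StarChain.
Variables (Ds vs : nat -> nat) (p : nat).
Hypotheses (hD : forall i, i <= p -> 2 < Ds i)
           (hv : forall i, i < p -> vs i < (star_chain Ds vs i).1).

Local Notation chain := (star_chain Ds vs).
Local Notation code := (star_chain_code Ds vs).

Lemma star_chain_identifies i : i <= p ->
  [/\ edges_within (chain i), dominates (chain i) (code i)
    & separates (chain i) (code i)].
Proof.
elim: i => [_|i IH hi]; first by apply: star_graph_identifies; have := hD (leq0n p); lia.
have [Gw Gdom Gsep] := IH (ltnW hi); have hv' := hv hi; have hD' := hD hi.
split; [exact: attach_star_edges_within | exact: attach_star_dominates
       | exact: attach_star_separates].
Qed.

Lemma count_star_chain_code i : i <= p ->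
  count (code i) (iota 0 (chain i).1) + i.+1 = (chain i).1.
Proof.
elim: i => [_|i IH hi] /=.
- rewrite add0n (@eq_in_count _ _ predT) ?count_predT ?size_iota ?addn1 // => x.
  by rewrite mem_iota /=; lia.
- have hD' := hD hi; rewrite count_extend_code; last lia.
  by have := IH (ltnW hi); lia.
Qed.

Lemma star_chain_order_le M i : (forall j, j <= p -> Ds j <= M) -> i <= p ->
  (chain i).1 <= Ds 0 + 1 + i * M.
Proof.
move=> hM; elim: i => [_|i IH hi] /=; first lia.
by have := IH (ltnW hi); have := hM _ hi; lia.
Qed.

Lemma star_chain_edge_mono i j x y : i <= j -> (chain i).2 x y -> (chain j).2 x y.
Proof.
elim: j => [|j IH]; first by rewrite leqn0 => /eqP ->.
by rewrite leq_eqVlt => /orP[/eqP -> //|/IH h /h] /= ->.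
Qed.

Lemma star_chain_order_mono i j : i <= j -> (chain i).1 <= (chain j).1.
Proof.
elim: j => [|j IH]; first by rewrite leqn0 => /eqP ->.
by rewrite leq_eqVlt => /orP[/eqP -> //|/IH h] /=; lia.
Qed.

Lemma Ds_le_max_degree i : i <= p -> Ds i <= max_degree (chain p).
Proof.
move=> hi; have hn := star_chain_order_mono hi; case: i hi hn => [|i] hi /= hn.
- rewrite -(size_iota 1 (Ds 0)).
  apply: (size_le_max_degree (x := 0)); rewrite ?iota_uniq //; first lia.
  move=> u; rewrite mem_iota => hu; apply/andP; split; first lia.
  by apply: (@star_chain_edge_mono 0) => //=; lia.
- have hv' := hv hi; have hD' := hD hi.
  set m := (chain i).1 in hn hv' *.
  have -> : Ds i.+1 = size (vs i :: iota m.+1 (Ds i.+1).-1) by rewrite /= size_iota; lia.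
  apply: (size_le_max_degree (x := m)); first lia.
    by rewrite /= iota_uniq mem_iota; apply/negP; lia.
  move=> u hu; apply/andP; split; first by move: hu; rewrite inE mem_iota; lia.
  apply: (@star_chain_edge_mono i.+1) => //=; rewrite /star_edge.
  by move: hu; rewrite inE mem_iota; lia.
Qed.

End StarChain.

Section RatioBounds.
Local Open Scope ring_scope.

Lemma ler_code_size_bound (R : realFieldType) (g n p M D0 : nat) :
  (0 < D0 <= M)%N -> (g + p.+1 <= n)%N -> (n <= D0 + 1 + p * M)%N ->
  g%:R <= (M%:R - 1) / M%:R * n%:R + 1 / D0%:R :> R.
Proof.
move=> /andP[D0pos D0M] hg hn.
have M0 : 0 < M%:R :> R by rewrite ltr0n; lia.
have D00 : 0 < D0%:R :> R by rewrite ltr0n.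
have key : (g * M * D0 <= (M - 1) * n * D0 + M)%N.
  have h0 : ((g + p.+1) * (M * D0) <= n * (M * D0))%N by rewrite leq_mul2r hg orbT.
  have h1 : (n * D0 <= (D0 + 1 + p * M) * D0)%N by rewrite leq_mul2r hn orbT.
  have h2 : (D0 * D0 <= M * D0)%N by rewrite leq_mul2r D0M orbT.
  nia.
have -> : (M%:R - 1) / M%:R * n%:R + 1 / D0%:R
          = ((M - 1) * n * D0 + M)%N%:R / (M * D0)%N%:R :> R.
  by rewrite natrD !natrM natrB; [field; rewrite !gt_eqF | lia].
by rewrite ler_pdivlMr ?ltr0n ?muln_gt0 -?natrM ?ler_nat ?mulnA; lia.
Qed.

Lemma ler_pred_ratio (R : numFieldType) (x y : R) : 0 < x -> x <= y ->
  (x - 1) / x <= (y - 1) / y.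
Proof.
move=> x0 xy; have y0 := lt_le_trans x0 xy.
by rewrite !mulrBl !divff ?gt_eqF // !mul1r lerD2l lerN2 lef_pV2 ?posrE.
Qed.

End RatioBounds.

Theorem mainTheorem5 (p : nat) (Ds vs : nat -> nat) :
  (1 <= p)%N ->
  (forall i, (i <= p)%N -> (3 <= Ds i)%N) ->
  (forall i, (i < p)%N -> (vs i < (star_chain Ds vs i).1)%N) ->
  let G := star_chain Ds vs p in
  let n := G.1 in
  let Delta := max_degree G in
  let Dmax := (\max_(i < p.+1) Ds i)%N in
  ((gammaID G)%:R <= ((Dmax%:R - 1) / Dmax%:R) * n%:R + 1 / (Ds 0%N)%:R :> rat)%R /\
  (((Dmax%:R - 1) / Dmax%:R) * n%:R + 1 / (Ds 0%N)%:R
     <= ((Delta%:R - 1) / Delta%:R) * n%:R + 1 / 3%:R :> rat)%R.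
Proof.
move=> _ hD hv G n Delta Dmax.
have [_ Gdom Gsep] := star_chain_identifies hD hv (leqnn p).
have hgamma : gammaID G + p.+1 <= n.
  rewrite /n -(count_star_chain_code vs hD (leqnn p)) -/G leq_add2r -card_set_pred.
  exact: gammaID_le_card (is_idcode_of_pred Gdom Gsep).
have hDmax i : i <= p -> Ds i <= Dmax.
  move=> hi; have hi' : i < p.+1 by [].
  exact: (leq_bigmax (F := fun j : 'I_p.+1 => Ds j) (Ordinal hi')).
have hn : n <= Ds 0 + 1 + p * Dmax := star_chain_order_le vs hDmax (leqnn p).
have hDelta : Dmax <= Delta.
  by apply/bigmax_leqP => i _; apply: (Ds_le_max_degree hD hv (ltn_ord i)).
have hD0 := hD 0 isT; have hD0max := hDmax 0 isT.
split; first by apply: (@ler_code_size_bound _ _ _ p); rewrite ?hD0max ?andbT; lia.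
apply: lerD.
- by apply/ler_wpM2r/ler_pred_ratio; rewrite ?ler0n ?ltr0n ?ler_nat //; lia.
- by rewrite !div1r lef_pV2 ?posrE ?ltr0n ?ler_nat //; lia.
Qed.
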